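(* Let $n\ge 2$ and $\sigma,\tau\in S_n$. Put $i=\sigma^{-1}(n-1)$, $j=\tau^{-1}(n-1)$, $a=\tau(i)$, $b=\sigma(j)$, $c=\sigma(n-1)$, $e=\tau(n-1)$, and $\Delta=\mathrm{hd}(\sigma,\tau)-\mathrm{hd}(\sigma^{\sf CT},\tau^{\sf CT})$. Then: (0) $\Delta=0$ if and only if one of the following holds: (1) $i,j,n-1$ pairwise distinct, $a\neq b$ and $c=e$; (2) $i,j,n-1$ pairwise distinct, $a=b$ and $c=e$; (3) $i=j\neq n-1$, $a=b=n-1$, $c\neq e$; (4) $i=j\neq n-1$, $a=b=n-1$, $c=e$; (5) $i=j=n-1$ and $a=b=c=e=n-1$. (I) $\Delta=1$ if and only if one of the following holds: (6) $i,j,n-1$ pairwise distinct and $a,b,c,e$ pairwise distinct; (7) $i,j,n-1$ pairwise distinct, $a=b$, $c\neq e$; (8) $i=n-1\neq j$, $a=e$, $c=n-1$, and $a,b,n-1$ pairwise distinct; (9) $j=n-1\neq i$, $b=c$, $e=n-1$, and $a,b,n-1$ pairwise distinct. (II) $\Delta=2$ if and only if one of the following holds: (10) $i,j,n-1$ pairwise distinct, $a=c$, $b\neq e$; (11) $i,j,n-1$ pairwise distinct, $a\neq c$, $b=e$; (12) $i=n-1\neq j$ and $a=b=e\neq c=n-1$; (13) $j=n-1\neq i$ and $a=b=c\neq e=n-1$. (III) $\Delta=3$ if and only if (14) $i,j,n-1$ are pairwise distinct, $a=c$ and $b=e$.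
   Context: $S_n$ is the symmetric group on $\{0,1,\ldots,n-1\}$; ${\rm hd}(\sigma,\tau)=|\{x:\sigma(x)\neq\tau(x)\}|$. The contraction of $\sigma\in S_n$ is $\sigma^{\sf CT}\in S_{n-1}$ (on $\{0,\ldots,n-2\}$) defined by $\sigma^{\sf CT}(x)=\sigma(n-1)$ if $x=\sigma^{-1}(n-1)$ and $\sigma^{\sf CT}(x)=\sigma(x)$ otherwise (i.e. delete $n-1$ from the cycle notation of $\sigma$). *)

From mathcomp Require Import all_boot all_order all_algebra all_fingroup.
Set Implicit Arguments. Unset Strict Implicit. Unset Printing Implicit Defensive.

(* S_n = 'S_n (permutations of 'I_n = {0,...,n-1}); here n = m.+1,
   and n-1 is ord_max : 'I_m.+1. *)

Definition hd (k : nat) (s t : 'S_k) : nat := #|[set x | s x != t x]|.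

(* contraction function: for x < m, sigma^CT(x) = sigma(m) if sigma(x) = m,
   and sigma(x) otherwise.  unlift ord_max y = Some y (as 'I_m) when y != m;
   the default branch (None) is unreachable. *)
Definition ct_fun (m : nat) (s : 'S_m.+1) (x : 'I_m) : 'I_m :=
  match unlift ord_max (s (lift ord_max x)) with
  | Some y => y
  | None => odflt x (unlift ord_max (s ord_max))
  end.

Lemma ct_funE m (s : 'S_m.+1) (x : 'I_m) :
  nat_of_ord (ct_fun s x) =
  nat_of_ord (if s (lift ord_max x) == ord_max then s ord_max else s (lift ord_max x)).
Proof.
have Hmax : s (lift ord_max x) <> s ord_max.
  by move/perm_inj/eqP; rewrite eq_sym (negbTE (neq_lift _ _)).
rewrite /ct_fun; case: unliftP => [y E|E].
  by rewrite E eq_sym (negbTE (neq_lift _ _)) lift_max.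
rewrite E eqxx; case: unliftP => [w Ew|Ew] /=; first by rewrite Ew lift_max.
by exfalso; apply: Hmax; rewrite E Ew.
Qed.

Lemma ct_fun_inj m (s : 'S_m.+1) : injective (ct_fun s).
Proof.
move=> x1 x2 /(congr1 (@nat_of_ord m)); rewrite !ct_funE => e.
apply: (@lift_inj _ ord_max); apply: (@perm_inj _ s).
case: eqP e => E1; case: eqP => E2 /= e.
- by rewrite E1 E2.
- exfalso; have: s ord_max = s (lift ord_max x2) by apply: val_inj.
  by move/perm_inj/eqP; rewrite (negbTE (neq_lift _ _)).
- exfalso; have: s (lift ord_max x1) = s ord_max by apply: val_inj.
  by move/perm_inj/eqP; rewrite eq_sym (negbTE (neq_lift _ _)).
- exact: val_inj.
Qed.

Definition contraction (m : nat) (s : 'S_m.+1) : 'S_m := perm (@ct_fun_inj m s).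

From mathcomp Require Import all_boot all_order all_algebra all_fingroup.
From mathcomp Require Import zify.

(* Away from i = s^-1(n-1) the contraction of s agrees with s, and likewise
   for t away from j, so the two Hamming distances only differ at the
   positions i, j and n-1.  Comparing them there gives D = 0 when i = j and
   D = [c != e] + [a = c] + [b = e] otherwise.  Since a, b, c, e are images of
   i, j, n-1 under permutations, their coincidences with each other and with
   n-1 are dictated by those of i, j, n-1 (a = n-1 iff i = j, c = n-1 iff
   i = n-1, a = e iff i = n-1, ...), and the classification is a finite check. *)

Set Implicit Arguments.
Unset Strict Implicit.
Unset Printing Implicit Defensive.

Import GRing.Theory.

Lemma card_set_sum (T : finType) (p : pred T) : #|[set x | p x]| = \sum_x p x.
Proof. by rewrite -sum1dep_card big_mkcond; apply: eq_bigr => x _; case: (p x). Qed.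

Lemma card_neq_local (T : finType) (U : eqType) (A : {set T}) (f g f' g' : T -> U) :
  {in ~: A, f =1 f'} -> {in ~: A, g =1 g'} ->
  #|[set x | f x != g x]| + \sum_(x in A) (f' x != g' x)
  = #|[set x | f' x != g' x]| + \sum_(x in A) (f x != g x).
Proof.
move=> ff' gg'; rewrite !card_set_sum !(bigID (mem A) predT) /=.
have -> : \sum_(x | x \notin A) (f x != g x) = \sum_(x | x \notin A) (f' x != g' x).
  by apply: eq_bigr => x xA; rewrite ff' ?gg' // inE.
by rewrite addnAC [RHS]addnC addnA.
Qed.

(* The contraction of s (see contractionE), extended to n-1 by s(n-1). *)
Definition ct_ext m (s : 'S_m.+1) (y : 'I_m.+1) : 'I_m.+1 :=
  if s y == ord_max then s ord_max else s y.

Lemma contractionE m (s : 'S_m.+1) (x : 'I_m) :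
  lift ord_max (contraction s x) = ct_ext s (lift ord_max x).
Proof. by apply: ord_inj; rewrite lift_max /contraction permE ct_funE. Qed.

Lemma ct_ext_max m (s : 'S_m.+1) : ct_ext s ord_max = s ord_max.
Proof. by rewrite /ct_ext; case: eqP. Qed.

Lemma ct_ext_preim m (s : 'S_m.+1) : ct_ext s ((s^-1)%g ord_max) = s ord_max.
Proof. by rewrite /ct_ext permKV eqxx. Qed.

Lemma ct_ext_id m (s : 'S_m.+1) y : y != (s^-1)%g ord_max -> ct_ext s y = s y.
Proof.
move=> /eqP yi; rewrite /ct_ext; case: (s y =P ord_max) => // syN.
by case: yi; rewrite -syN permK.
Qed.

Section Contraction.
Variables (m : nat) (s t : 'S_m.+1).
Let N : 'I_m.+1 := ord_max.
Let i := (s^-1)%g N.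
Let j := (t^-1)%g N.
Let a := t i.
Let b := s j.
Let c := s N.
Let e := t N.

Lemma position_coincidences :
  [/\ (a = N <-> i = j), (b = N <-> j = i), (c = N <-> N = i) & (e = N <-> N = j)]
  /\ (a = e <-> i = N) /\ (b = c <-> j = N).
Proof.
have preimP (p : 'S_m.+1) z : p z = N <-> z = (p^-1)%g N.
  by split=> [<-|->]; rewrite ?permK ?permKV.
have injP (p : 'S_m.+1) x y : p x = p y <-> x = y by split=> [/perm_inj|->].
by do 2?split; [apply: preimP..|apply: injP|apply: injP].
Qed.

Lemma hd_contraction_ext :
  hd (contraction s) (contraction t) + (c != e) = #|[set y | ct_ext s y != ct_ext t y]|.
Proof.
rewrite /hd !card_set_sum big_ord_recr /= !ct_ext_max; congr (_ + _).
apply: eq_bigr => x _; rewrite -(inj_eq (@lift_inj _ ord_max)) !contractionE.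
by congr (ct_ext _ _ != ct_ext _ _); apply: ord_inj; rewrite lift_max.
Qed.

Lemma hd_contraction :
  hd s t = hd (contraction s) (contraction t)
           + (if i == j then 0 else (c != e) + (a == c) + (b == e)).
Proof.
have s_off : {in ~: [set i; j], s =1 ct_ext s}.
  by move=> y; rewrite !inE negb_or => /andP[yi _]; rewrite ct_ext_id.
have t_off : {in ~: [set i; j], t =1 ct_ext t}.
  by move=> y; rewrite !inE negb_or => /andP[_ yj]; rewrite ct_ext_id.
have s_i : s i = N := permKV s N.
have t_j : t j = N := permKV t N.
have ct_s_i : ct_ext s i = c := ct_ext_preim s.
have ct_t_j : ct_ext t j = e := ct_ext_preim t.
have := card_neq_local s_off t_off; rewrite -hd_contraction_ext -[#|_|]/(hd s t).
have [ij|ij] := eqVneq i j.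
  rewrite -ij in t_j ct_t_j *.
  by rewrite setUid !big_set1 s_i t_j ct_s_i ct_t_j eqxx /= !addn0 => /addIn.
have ji : j != i by rewrite eq_sym.
have t_i : (N != t i) by rewrite -t_j (inj_eq perm_inj).
have s_j : (s j != N) by rewrite -s_i (inj_eq perm_inj).
rewrite !big_setU1 ?inE // !big_set1 s_i t_j ct_s_i ct_t_j t_i s_j.
rewrite (ct_ext_id ij) (ct_ext_id ji) /= -/a -/b [c == a]eq_sym.
by case: (a == c); case: (b == e) => /=; lia.
Qed.

End Contraction.

Ltac decide_iff F := match type of F with ?L <-> _ =>
  first [ have ? : L by apply F; congruence
        | have ? : ~ L by move/F => ?; congruence ] end.

Ltac split_congruence := repeat match goal with |- _ /\ _ => split end; congruence.

Ltac pick_disjunct := first [ split_congruence | left; split_congruence | right; pick_disjunct ].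

Ltac decide_case := let H := fresh in split=> H;
  [ first [ discriminate H | pick_disjunct ]
  | first [ reflexivity | exfalso; decompose [and or] H; congruence ] ].

Theorem proposition4p2 (m : nat) (hm : (1 <= m)%N) (s t : 'S_m.+1) :
  let N := (ord_max : 'I_m.+1) in
  let i := (s^-1)%g N in
  let j := (t^-1)%g N in
  let a := t i in
  let b := s j in
  let c := s N in
  let e := t N in
  let D : int := ((hd s t)%:Z - (hd (contraction s) (contraction t))%:Z)%R in
  let pd3 (x y z : 'I_m.+1) := x <> y /\ x <> z /\ y <> z in
  (D = 0%R <->
     (pd3 i j N /\ a <> b /\ c = e) \/
     (pd3 i j N /\ a = b /\ c = e) \/
     (i = j /\ i <> N /\ a = b /\ b = N /\ c <> e) \/
     (i = j /\ i <> N /\ a = b /\ b = N /\ c = e) \/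
     (i = j /\ j = N /\ a = b /\ b = c /\ c = e /\ e = N)) /\
  (D = 1%R <->
     (pd3 i j N /\ a <> b /\ a <> c /\ a <> e /\ b <> c /\ b <> e /\ c <> e) \/
     (pd3 i j N /\ a = b /\ c <> e) \/
     (i = N /\ N <> j /\ a = e /\ c = N /\ pd3 a b N) \/
     (j = N /\ N <> i /\ b = c /\ e = N /\ pd3 a b N)) /\
  (D = 2%R <->
     (pd3 i j N /\ a = c /\ b <> e) \/
     (pd3 i j N /\ a <> c /\ b = e) \/
     (i = N /\ N <> j /\ a = b /\ b = e /\ e <> c /\ c = N) \/
     (j = N /\ N <> i /\ a = b /\ b = c /\ c <> e /\ e = N)) /\
  (D = 3%R <-> (pd3 i j N /\ a = c /\ b = e)).
Proof.
(* The classification also holds for n = 1. *)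
move=> N i j a b c e D pd3; subst pd3.
have {D}-> : D = Posz (if i == j then 0 else (c != e) + (a == c) + (b == e)).
  by rewrite /D (hd_contraction s t) PoszD addrAC subrr add0r.
move: (position_coincidences s t); rewrite -/N -/i -/j -/a -/b -/c -/e.
case=> [[aN bN cN eN] [ae bc]]; clearbody N i j a b c e.
case: (i =P j) => ij; case: (i =P N) => iN; case: (j =P N) => jN; try congruence.
all: decide_iff aN; decide_iff bN; decide_iff cN; decide_iff eN; decide_iff ae; decide_iff bc.
all: case: (c =P e) => ce; case: (a =P c) => ac; case: (b =P e) => be; case: (a =P b) => ab;
  try congruence.
all: by split; [decide_case | split; [decide_case | split; decide_case]].
Qed.
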